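(* For $\mathbf k\in\mathbb Z^{r'}_{++}$, $\mathbf l\in\mathbb Z^{r''}_{++}$ let $$C_0^d(\lambda,\mathbf k,\mathbf l)=\frac{\prod_{i=1}^{r'}\prod_{j=1}^{r''}(\lambda-\frac d2(i+j-1))_{k_i+l_j}}{\prod_{i=1}^{r'+1}\prod_{j=1}^{r''+1}(\lambda-\frac d2(i+j-2))_{k_i+l_j}},\qquad \phi_0(\mathbf k,\mathbf l)_a=\min\{k_i+l_j:1\le i\le r'+1,1\le j\le r''+1,i+j=a+1\}$$ ($1\le a\le r'+r''$, $k_{r'+1}=l_{r''+1}=0$). Let $1\le m_1'\le m_2'\le r'$ and $1\le m_1''\le m_2''\le r''$ with $k_1=\dots=k_{m_1'}$, $l_1=\dots=l_{m_1''}$ and $k_{m_2'+1}=l_{m_2''+1}=0$. Then the set of $\lambda\in\mathbb C$ where $(\lambda)_{\phi_0(\mathbf k,\mathbf l),d}C_0^d(\lambda,\mathbf k,\mathbf l)=0$ is contained in the real interval $$\Bigl[\tfrac d2\max\{m_1',m_1''\}-(k_1+l_1)+1,\ \tfrac d2(m_2'+m_2''-1)-\max\{k_{m_2'},l_{m_2''}\}\Bigr]$$ if $k_1l_1\ge1$, and is empty if $k_1l_1=0$. In particular, for $m=1,\dots,r'+r''-1$, if $\phi_0(\mathbf k,\mathbf l)_{m+1}=0$ and $\phi_0(\mathbf k,\mathbf l)_m\ne0$ (with $\phi_0(\mathbf k,\mathbf l)_{r'+r''+1}:=0$), then $C_0^d(\lambda,\mathbf k,\mathbf l)$ is holomorphic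 and non-zero at $\lambda=\frac d2 m$ and has a pole at $\lambda=\frac d2(m-1)$.
   Context: $r',r''\ge1$ are integers, $d>0$ is a real number, $\mathbb Z^s_{++}=\{\mathbf m\in\mathbb Z^s:m_1\ge\cdots\ge m_s\ge0\}$, $(a)_m=a(a+1)\cdots(a+m-1)$, and $(\lambda)_{\mathbf m,d}=\prod_{j=1}^{s}(\lambda-\frac d2(j-1))_{m_j}$ for $\mathbf m\in\mathbb Z^s_{\ge0}$. The product $(\lambda)_{\phi_0,d}C_0^d$ is an entire (polynomial) function of $\lambda$. *)

From HB Require Import structures.
From mathcomp Require Import all_boot all_order all_algebra.
From mathcomp Require Import complex.
Set Implicit Arguments. Unset Strict Implicit. Unset Printing Implicit Defensive.
Import Order.TTheory GRing.Theory Num.Theory.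
Local Open Scope ring_scope.

Section Defs.
Variable R : rcfType.
Local Notation C := R[i].

(* 1-based entries of a partition-like tuple k = (k_1,...,k_r') given as a
   seq of length r'; out of range entries (in particular k_{r'+1}) are 0. *)
Definition ent (k : seq nat) (i : nat) : nat := nth 0%N k i.-1.

Definition Zpp (k : seq nat) : bool := sorted geq k.

(* Pochhammer symbol (lambda - c)_m as a polynomial in lambda:
   prod_{i<m} (lambda - c + i) *)
Definition pochX (c : C) (m : nat) : {poly C} :=
  \prod_(i < m) ('X + (i%:R - c)%:P).

Definition rC (x : R) : C := x%:C%C.

Definition C0num (d : R) (k l : seq nat) : {poly C} :=
  \prod_(1 <= i < (size k).+1) \prod_(1 <= j < (size l).+1)
     pochX (rC (d / 2%:R * (i + j - 1)%N%:R)) (ent k i + ent l j).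

Definition C0den (d : R) (k l : seq nat) : {poly C} :=
  \prod_(1 <= i < (size k).+2) \prod_(1 <= j < (size l).+2)
     pochX (rC (d / 2%:R * (i + j - 2)%N%:R)) (ent k i + ent l j).

(* The index set is nonempty for 1 <= a <= r'+r''+1; the neutral element
   sumn k + sumn l bounds every k_i + l_j, so it does not affect the min.
   (For a = r'+r''+1 this gives k_{r'+1}+l_{r''+1} = 0, as in the paper.) *)
Definition phi0 (k l : seq nat) (a : nat) : nat :=
  \big[minn/(sumn k + sumn l)%N]_(1 <= i < (size k).+2 |
      (i <= a)%N && (a.+1 - i <= (size l).+1)%N)
     (ent k i + ent l (a.+1 - i))%N.

Definition pochphi (d : R) (k l : seq nat) : {poly C} :=
  \prod_(1 <= j < (size k + size l).+1)
     pochX (rC (d / 2%:R * (j - 1)%N%:R)) (phi0 k l j).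

End Defs.

From HB Require Import structures.
From mathcomp Require Import all_boot all_order all_algebra.
From mathcomp Require Import complex.
From mathcomp Require Import zify lra.
From Stdlib Require Import Classical_Prop.
Set Implicit Arguments. Unset Strict Implicit. Unset Printing Implicit Defensive.

(* The factor [(lambda - c)_e] vanishes simply at each [c - t] with [t < e].
   Grouping the Pochhammer factors of [(lambda)_(phi_0,d)] and of the
   numerator and denominator of [C_0^d] by the antidiagonal [b] that fixes
   their shift [c = (d/2) b], the order of [(lambda)_(phi_0,d) C_0^d] at
   [(d/2) b - t] becomes a balance of the numbers of exponents [> t] along
   each antidiagonal.  There the numerator exponents interleave the
   denominator ones and dominate both neighbours, since [k] and [l] are
   nonincreasing; if they agree with the left neighbours up to some place
   and with the right ones afterwards, the numbers cancel up to the term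
   [phi_0], which records the minimum.  Such a splitting place exists on the
   flat initial blocks of [k] and [l], beyond their zero tails, and for [t]
   at least [k_1 + l_1] or below [k_(m_2')] or [l_(m_2'')]; this confines
   the zeros.  At the last nonzero value of [phi_0] the same splittings leave
   only [(lambda)_(phi_0,d)] unbalanced, which vanishes at [(d/2)(m-1)] and
   not at [(d/2) m]. *)

Lemma sum_mask_window N lo hi (c : pred nat) (f : nat -> nat) : hi <= N ->
  (forall i, i < N -> c i = (lo <= i < hi)) ->
  \sum_(0 <= i < N) (if c i then f i else 0) = \sum_(0 <= i < hi - lo) f (lo + i).
Proof.
move=> hN hc; case: (leqP hi lo) => hlo.
  have -> : hi - lo = 0 by lia.
  rewrite [RHS]big_geq // big_nat_cond big1 // => i /andP[/andP[_ iN] _].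
  by rewrite hc // ifF //; apply/negbTE; apply/negP => /andP[]; lia.
have outside m n : (forall i, m <= i < n -> ~~ (lo <= i < hi)) -> n <= N ->
    \sum_(m <= i < n) (if c i then f i else 0) = 0.
  move=> Hmn hn; rewrite big_nat_cond big1 // => i /andP[/andP[h1 h2] _].
  by rewrite hc ?(negbTE (Hmn i _)) //; [apply/andP | lia].
rewrite (@big_cat_nat _ _ _ lo 0 N) ?(@big_cat_nat _ _ _ hi lo N) //=; try lia.
rewrite outside 1?[X in _ + (_ + X)]outside //; try lia;
  try by move=> i /andP[? ?]; apply/negP => /andP[]; lia.
rewrite add0n addn0 -{1}[lo]add0n big_addn.
rewrite big_nat_cond [RHS]big_nat_cond; apply: eq_bigr => i /andP[/andP[_ hi'] _].
by rewrite (addnC i lo) hc ?ifT //; [apply/andP; split | ]; lia.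
Qed.

Lemma sum_antidiagonals P Q (G : nat -> nat -> nat) :
  \sum_(0 <= i < P) \sum_(0 <= j < Q) G i j =
  \sum_(0 <= s < P + Q) \sum_(0 <= i < P)
     (if (i <= s) && (s - i < Q) then G i (s - i) else 0).
Proof.
rewrite [RHS]exchange_big_nat; apply: eq_big_nat => i /andP[_ hi].
rewrite (@sum_mask_window (P + Q) i (i + Q) _ (fun s => G i (s - i))); first last.
- by move=> s hs; apply/idP/idP => /andP[h1 h2]; apply/andP; split; lia.
- lia.
have -> : i + Q - i = Q by lia.
by apply: eq_bigr => j _; have -> : i + j - i = j by lia.
Qed.

(* If [b s] holds then [b] holds everywhere and [c] counts [n] true values;
   otherwise [b] vanishes on [s] and [c] enumerates [b] with [b s] left out. *)
Lemma valley_count n s (b c : nat -> bool) :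
  (forall i, i < n -> i < s -> c i = b i /\ (b i.+1 -> b i)) ->
  (forall i, i < n -> s <= i -> c i = b i.+1 /\ (b i -> b i.+1)) ->
  all b (iota 0 n.+1) + \sum_(0 <= i < n) c i = \sum_(0 <= i < n.+1) b i.
Proof.
elim: n => [|n IH] hl hr; first by rewrite big_geq // big_nat1 /= andbT addn0.
have -> : iota 0 n.+2 = iota 0 n.+1 ++ [:: n.+1] by rewrite -addn1 iotaD.
rewrite all_cat [all b [:: n.+1]]/= andbT.
rewrite big_nat_recr // [RHS]big_nat_recr // -IH; first last.
- by move=> i hi; apply: hr; lia.
- by move=> i hi; apply: hl; lia.
set A := all b (iota 0 n.+1).
have A_last : A -> b n by move/allP; apply; rewrite mem_iota; lia.
case: (ltnP n s) => hns.
  have [-> down] := hl n (ltnSn _) hns.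
  have A_down : b n -> A.
    move=> bn; apply/allP => i; rewrite mem_iota add0n => /andP[_ hi].
    have bsub j : j <= n -> b (n - j).
      elim: j => [|j IHj] hj; first by rewrite subn0.
      have [_ step] := hl (n - j.+1) ltac:(lia) ltac:(lia).
      apply: step; have -> : (n - j.+1).+1 = n - j by lia.
      by apply: IHj; lia.
    by have := bsub (n - i) (leq_subr _ _); have -> : n - (n - i) = i by lia.
  move: A_last A_down down; case: A; case: (b n); case: (b n.+1) => H1 H2 H3 /=;
    first [lia | by have := H1 isT | by have := H2 isT | by have := H3 isT].
have [-> up] := hr n (ltnSn _) hns.
move: A_last up; case: A; case: (b n); case: (b n.+1) => H1 H2 /=;
  first [lia | by have := H1 isT | by have := H2 isT | by have := H2 (H1 isT)].
Qed.

Lemma ltn_bigmin (I : Type) (r : seq I) (P : pred I) (F : I -> nat) x0 t :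
  (t < \big[minn/x0]_(i <- r | P i) F i) = (t < x0) && all (fun i => P i ==> (t < F i)) r.
Proof.
elim: r => [|a r IH]; first by rewrite big_nil andbT.
rewrite big_cons /=; case: (P a) => /=; last by rewrite IH.
by rewrite leq_min IH; case: (t < F a); case: (t < x0); case: all.
Qed.

Lemma bigmin_leq (I : eqType) (r : seq I) (P : pred I) (F : I -> nat) x0 i0 :
  P i0 -> i0 \in r -> \big[minn/x0]_(i <- r | P i) F i <= F i0.
Proof.
move=> P0 hin; rewrite leqNgt ltn_bigmin; apply/negP => /andP[_ /allP H].
by have := H i0 hin; rewrite P0 /= ltnn.
Qed.

Lemma bigmin_leq_id (I : Type) (r : seq I) (P : pred I) (F : I -> nat) x0 :
  \big[minn/x0]_(i <- r | P i) F i <= x0.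
Proof. by rewrite leqNgt ltn_bigmin; apply/negP => /andP[]; rewrite ltnn. Qed.

Section Entries.
Variable k : seq nat.
Hypothesis hk : Zpp k.

Lemma ent_nonincr i j : i <= j -> ent k j <= ent k i.
Proof.
move=> hij; rewrite /ent; case: (ltnP j.-1 (size k)) => hj; last by rewrite nth_default.
have geq_trans : transitive geq by move=> x y z /= h1 h2; apply: leq_trans h2 h1.
have := sorted_leq_nth geq_trans (fun x => leqnn x) 0 hk (i.-1) (j.-1).
by rewrite !inE; apply; lia.
Qed.

Lemma ent_leq_head i : ent k i <= ent k 1.
Proof. exact: (@ent_nonincr 0). Qed.

Lemma ent_eq0_after m i : ent k m.+1 = 0 -> m < i -> ent k i = 0.
Proof. by move=> h0 hi; apply/eqP; rewrite -leqn0 -h0 ent_nonincr. Qed.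

Lemma ent_leq_sumn i : ent k i <= sumn k.
Proof.
rewrite /ent; elim: k (i.-1) => [|x s IH] [|j] //=; first exact: leq_addr.
exact: leq_trans (IH j) (leq_addl _ _).
Qed.

End Entries.

Section Antidiagonals.
Variables k l : seq nat.
Hypotheses (hk : Zpp k) (hl : Zpp l).
Local Notation K := (ent k).
Local Notation L := (ent l).
Local Notation p := (size k).
Local Notation q := (size l).

(* On the antidiagonal [b] (0-based), [den_entry b i] is the exponent
   [k_(i+1) + l_j] of the denominator with [(i+1) + j - 2 = b], and
   [num_entry b i] the exponent of the numerator with [(i+1) + j - 1 = b];
   in range are [b - q <= i <= minn p b], resp. [b - q <= i < minn p b].
   A Pochhammer factor [(lambda - (d/2) b)_e] vanishes at [(d/2) b - t] iff
   [t < e], so [balanced b t] says that the factors attached to [b] vanish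
   equally often at [(d/2) b - t] upstairs and downstairs. *)
Definition den_entry b i := K i.+1 + L (b - i).+1.
Definition num_entry b i := K i.+1 + L (b - i).

Definition den_count b t := \sum_(0 <= i < p.+1)
  (if (i <= b) && (b - i < q.+1) then (t < den_entry b i : nat) else 0).
Definition num_count b t := \sum_(0 <= i < p)
  (if (i < b) && (b.-1 - i < q) then (t < num_entry b i : nat) else 0).

Definition balanced b t := (t < phi0 k l b.+1) + num_count b t = den_count b t.

Lemma ltn_phi0 b t : b <= p + q ->
  (t < phi0 k l b.+1) =
    all (fun i => t < den_entry b (b - q + i)) (iota 0 (minn p b - (b - q)).+1).
Proof.
move=> hb; rewrite /phi0 ltn_bigmin; apply/idP/idP.
  move=> /andP[_ /allP H]; apply/allP => i; rewrite mem_iota add0n => /andP[_ hi].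
  have := H (b - q + i).+1; rewrite mem_index_iota.
  have -> : b.+2 - (b - q + i).+1 = (b - (b - q + i)).+1 by lia.
  by move=> H1; rewrite /den_entry; apply: (implyP (H1 _)); apply/andP; split; lia.
move=> /allP H; apply/andP; split.
  have := H 0; rewrite mem_iota /= addn0 => /(_ isT) /leq_trans; apply.
  by rewrite /den_entry leq_add // ent_leq_sumn.
apply/allP => i; rewrite mem_index_iota => hi; apply/implyP => /andP[h1 h2].
have := H (i.-1 - (b - q)); rewrite mem_iota add0n /den_entry.
have -> : b - q + (i.-1 - (b - q)) = i.-1 by lia.
have -> : i.-1.+1 = i by lia.
have -> : (b - i.-1).+1 = b.+2 - i by lia.
by apply; lia.
Qed.

(* Along the antidiagonal the numerator entry [i] sits between the
   denominator entries [i] and [i+1] and dominates both; [s] is the place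
   where it switches from agreeing with the left one to the right one. *)
Lemma balanced_of_split b t s : b <= p + q ->
  (forall i, i < minn p b - (b - q) -> i < s ->
    (t < num_entry b (b - q + i)) = (t < den_entry b (b - q + i)) /\
    ((t < den_entry b (b - q + i.+1)) -> (t < den_entry b (b - q + i)))) ->
  (forall i, i < minn p b - (b - q) -> s <= i ->
    (t < num_entry b (b - q + i)) = (t < den_entry b (b - q + i.+1)) /\
    ((t < den_entry b (b - q + i)) -> t < den_entry b (b - q + i.+1))) ->
  balanced b t.
Proof.
move=> hb hleft hright; rewrite /balanced /den_count /num_count.
rewrite (@sum_mask_window p.+1 (b - q) (minn p b).+1 _ (fun i => t < den_entry b i));
  last 2 first.
- lia.
- by move=> i hi; apply/idP/idP => /andP[h1 h2]; apply/andP; split; lia.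
rewrite (@sum_mask_window p (b - q) (minn p b) _ (fun i => t < num_entry b i));
  last 2 first.
- lia.
- by move=> i hi; apply/idP/idP => /andP[h1 h2]; apply/andP; split; lia.
have -> : (minn p b).+1 - (b - q) = (minn p b - (b - q)).+1 by lia.
by rewrite ltn_phi0 //; apply: (valley_count (s := s)).
Qed.

Lemma balanced_k_flat b t : (forall i, 1 <= i <= b.+1 -> K i = K 1) ->
  b <= p + q -> balanced b t.
Proof.
move=> hK hb; apply: (@balanced_of_split b t 0) => // i hi _.
rewrite /num_entry /den_entry (hK (b - q + i).+1) ?(hK (b - q + i.+1).+1);
  try by apply/andP; split; lia.
have -> : (b - (b - q + i.+1)).+1 = b - (b - q + i) by lia.
split=> // h; apply: leq_trans h _; rewrite leq_add2l; apply: ent_nonincr; lia.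
Qed.

Lemma balanced_l_flat b t : (forall j, 1 <= j <= b.+1 -> L j = L 1) ->
  b <= p + q -> balanced b t.
Proof.
move=> hL hb; apply: (@balanced_of_split b t (minn p b - (b - q))) => // i hi hs;
  last lia.
rewrite /num_entry /den_entry.
have -> : (b - (b - q + i.+1)).+1 = b - (b - q + i) by lia.
rewrite (hL (b - (b - q + i)).+1) ?(hL (b - (b - q + i))); try by apply/andP; split; lia.
split=> // h; apply: leq_trans h _; rewrite leq_add2r; apply: ent_nonincr; lia.
Qed.

Lemma right_split_of_k_tail b t m i : K m.+1 = 0 -> m <= b - q + i ->
  b - q + i < b ->
  (t < num_entry b (b - q + i)) = (t < den_entry b (b - q + i.+1)) /\
  ((t < den_entry b (b - q + i)) -> t < den_entry b (b - q + i.+1)).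
Proof.
move=> hK h1 h2; rewrite /num_entry /den_entry.
rewrite !(ent_eq0_after hk hK) ?add0n; try lia.
have -> : (b - (b - q + i.+1)).+1 = b - (b - q + i) by lia.
split=> // h; apply: leq_trans h _; apply: ent_nonincr; lia.
Qed.

Lemma balanced_beyond_tails b t m' m'' : K m'.+1 = 0 -> L m''.+1 = 0 ->
  m' + m'' <= b -> b <= p + q -> balanced b t.
Proof.
move=> hK hL hm hb; apply: (@balanced_of_split b t (m' - (b - q))) => // i hi hs;
  last by apply: (right_split_of_k_tail _ hK); lia.
rewrite /num_entry /den_entry !(ent_eq0_after hl hL) ?addn0; try lia.
split=> // h; apply: leq_trans h _; apply: ent_nonincr; lia.
Qed.

Lemma balanced_below_k_last b t m : K m.+1 = 0 -> t < K m -> b <= p + q ->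
  balanced b t.
Proof.
move=> hK ht hb; apply: (@balanced_of_split b t (m - (b - q))) => // i hi hs;
  last by apply: (right_split_of_k_tail _ hK); lia.
have ltK : t < K (b - q + i).+1 by apply: leq_trans ht _; apply: ent_nonincr; lia.
by rewrite /num_entry /den_entry !(leq_trans ltK (leq_addr _ _)).
Qed.

Lemma balanced_below_l_last b t m : L m.+1 = 0 -> t < L m -> b <= p + q ->
  balanced b t.
Proof.
move=> hL ht hb; apply: (@balanced_of_split b t (b - m - (b - q))) => // i hi hs;
  rewrite /num_entry /den_entry;
  have -> : (b - (b - q + i.+1)).+1 = b - (b - q + i) by lia.
  rewrite !(ent_eq0_after hl hL) ?addn0; try lia.
  split=> // h; apply: leq_trans h _; apply: ent_nonincr; lia.
have ltL : t < L (b - (b - q + i)) by apply: leq_trans ht _; apply: ent_nonincr; lia.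
by rewrite !(leq_trans ltL (leq_addl _ _)).
Qed.

Lemma balanced_above_head b t : K 1 + L 1 <= t -> b <= p + q -> balanced b t.
Proof.
move=> ht hb; apply: (@balanced_of_split b t 0) => // i _ _.
have small x y : t < K x + L y = false.
  apply/negbTE; rewrite -leqNgt; apply: leq_trans _ ht.
  by apply: leq_add; apply: ent_leq_head.
by rewrite /num_entry /den_entry !small.
Qed.

Lemma balanced_degenerate b t : K 1 * L 1 = 0 -> b <= p + q -> balanced b t.
Proof.
move=> /eqP; rewrite muln_eq0 => /orP[] /eqP h0 hb.
  by apply: balanced_k_flat => // i /andP[hi _]; rewrite h0 (ent_eq0_after hk h0).
by apply: balanced_l_flat => // j /andP[hj _]; rewrite h0 (ent_eq0_after hl h0).
Qed.

Lemma unbalanced_window m1' m2' m1'' m2'' b t :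
  (forall i, 1 <= i <= m1' -> K i = K 1) ->
  (forall j, 1 <= j <= m1'' -> L j = L 1) ->
  K m2'.+1 = 0 -> L m2''.+1 = 0 -> b <= p + q -> ~ balanced b t ->
  [/\ maxn m1' m1'' <= b, b <= m2' + m2'' - 1,
      maxn (K m2') (L m2'') <= t & t < K 1 + L 1].
Proof.
move=> hK1 hL1 hK2 hL2 hb unbal; split.
- rewrite leqNgt; apply/negP => hlt; apply: unbal.
  case: (leqP b.+1 m1') => hb1.
    by apply: balanced_k_flat => // i /andP[h1 h2]; apply: hK1; lia.
  by apply: balanced_l_flat => // j /andP[h1 h2]; apply: hL1; lia.
- rewrite leqNgt; apply/negP => hlt; apply: unbal.
  by apply: (@balanced_beyond_tails b t m2' m2'' hK2 hL2); lia.
- rewrite geq_max; apply/andP; split; rewrite leqNgt; apply/negP => hlt; apply: unbal.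
    exact: (@balanced_below_k_last b t m2' hK2).
  exact: (@balanced_below_l_last b t m2'' hL2).
- by rewrite ltnNge; apply/negP => hge; apply: unbal; apply: balanced_above_head.
Qed.

Lemma phi0_leq a i : 1 <= i < p.+2 -> i <= a -> a.+1 - i <= q.+1 ->
  phi0 k l a <= K i + L (a.+1 - i).
Proof.
move=> h1 h2 h3; rewrite /phi0; apply: (@bigmin_leq _ _ _ (fun i => K i + L (a.+1 - i))).
  by rewrite h2 h3.
by rewrite mem_index_iota.
Qed.

Lemma phi0_last : phi0 k l (p + q).+1 = 0.
Proof.
apply/eqP; rewrite -leqn0; apply: leq_trans (@phi0_leq _ p.+1 _ _ _) _; try lia.
have -> : (p + q).+2 - p.+1 = q.+1 by lia.
by rewrite /ent !nth_default.
Qed.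

Lemma phi0_eq0_witness a : phi0 k l a = 0 -> sumn k + sumn l = 0 \/
  exists i, [/\ 1 <= i < p.+2, i <= a, a.+1 - i <= q.+1 & K i + L (a.+1 - i) = 0].
Proof.
move=> h0; case: (posnP (sumn k + sumn l)) => [|sum_gt0]; first by left.
have := ltn_bigmin (index_iota 1 p.+2) (fun i => (i <= a) && (a.+1 - i <= q.+1))
  (fun i => K i + L (a.+1 - i)) (sumn k + sumn l) 0.
rewrite -/(phi0 k l a) h0 ltnn sum_gt0 => /esym/negbT/allPn[i hin].
rewrite negb_imply => /andP[/andP[h1 h2]]; rewrite lt0n negbK => /eqP h3.
by right; exists i; split=> //; rewrite mem_index_iota in hin.
Qed.

Lemma phi0_eq0_after m : phi0 k l m.+1 = 0 ->
  forall a, m.+1 <= a <= p + q.+1 -> phi0 k l a = 0.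
Proof.
move=> h0 a /andP[ha1 ha2]; apply/eqP; rewrite -leqn0.
case: (phi0_eq0_witness h0) => [hs|[i [/andP[hi1 hi2] hi3 hi4 hi5]]].
  by rewrite -hs /phi0 bigmin_leq_id.
have hKi : K i.-1.+1 = 0 by rewrite prednK //; lia.
have hLi : L (m.+2 - i) = 0 by lia.
apply: leq_trans (@phi0_leq a (maxn i (a - q)) _ _ _) _; try lia.
rewrite (ent_eq0_after hk hKi); last lia.
by rewrite add0n -hLi ent_nonincr //; lia.
Qed.

Lemma balanced_phi0_edge m b t : phi0 k l m.+1 = 0 -> phi0 k l m <> 0 ->
  b <= p + q -> m <= b \/ (b = m.-1 /\ t = 0) -> balanced b t.
Proof.
move=> hphi1 hphi0 hb hbm.
have [KL0|] := eqVneq (K 1 * L 1) 0; first exact: balanced_degenerate.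
rewrite muln_eq0 negb_or => /andP[hK1 hL1].
case: (phi0_eq0_witness hphi1) => [hs|[i [/andP[hi1 hi2] hi3 hi4 hi5]]].
  by move: hK1; have := ent_leq_sumn k 1; lia.
have hKi : K i = 0 by lia.
have hLi : L (m.+2 - i) = 0 by lia.
have hi_gt1 : 1 < i.
  rewrite ltnNge; apply: contraNN hK1 => hi.
  have -> : 1 = i by lia.
  by rewrite hKi.
have hi_le : i <= m.
  rewrite leqNgt; apply: contraNN hL1 => hi.
  have -> : 1 = m.+2 - i by lia.
  by rewrite hLi.
have hK2 : K i.-1.+1 = 0 by rewrite prednK //; lia.
have hL2 : L (m.+1 - i).+1 = 0 by rewrite -hLi; congr ent; lia.
case: hbm => [hmb | [-> ->]].
  by apply: (@balanced_beyond_tails b t i.-1 (m.+1 - i) hK2 hL2); lia.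
apply: (@balanced_below_k_last _ 0 i.-1 hK2); last lia.
have : phi0 k l m <= K i.-1 + L (m.+1 - i.-1) by apply: phi0_leq; lia.
have -> : m.+1 - i.-1 = m.+2 - i by lia.
by rewrite hLi addn0; lia.
Qed.

End Antidiagonals.

Import Order.TTheory GRing.Theory Num.Theory.
Local Open Scope ring_scope.

Lemma mup_prod (F : fieldType) (x : F) (I : Type) (r : seq I) (P : pred I)
    (G : I -> {poly F}) :
  (forall i, P i -> G i != 0) ->
  mup x (\prod_(i <- r | P i) G i) = (\sum_(i <- r | P i) mup x (G i))%N.
Proof.
move=> hG; have ind := @big_ind2 _ _ (fun p n => p != 0 /\ mup x p = n)
  1 *%R 0%N addn _ _ I r P G (fun i => mup x (G i)).
apply: (proj2 (ind _ _ _)).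
- by split; [exact: oner_neq0 | rewrite mupNroot // root1].
- move=> p1 n1 p2 n2 [h1 <-] [h2 <-]; split; first exact: mulf_neq0.
  exact: mupM.
- by move=> i Pi; split; [exact: hG |].
Qed.

Lemma sum_ord_eqn m t : (\sum_(i < m) (i == t :> nat))%N = (t < m)%N.
Proof.
elim: m => [|m IH]; first by rewrite big_ord0.
by rewrite big_ord_recr /= IH; case: eqP => [->|ne] /=; lia.
Qed.

Section Pochhammer.
Variable R : rcfType.
Local Notation C := R[i].

Lemma pochX_monic (c : C) m : pochX c m \is monic.
Proof. by apply: monic_prod => i _; apply: monicXaddC. Qed.

Lemma mup_pochX (x c : C) m : mup x (pochX c m) = (\sum_(i < m) ((c - i%:R)%R == x))%N.
Proof.
rewrite /pochX mup_prod; last by move=> i _; apply/monic_neq0/monicXaddC.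
apply: eq_bigr => i _.
have -> : 'X + (i%:R - c)%:P = ('X - (c - i%:R)%:P) ^+ 1 by rewrite expr1 -polyCN opprB.
by rewrite mup_XsubCX.
Qed.

Lemma mup_pochX_cases (x c : C) :
  (forall m, mup x (pochX c m) = 0%N) \/
  exists t, x = c - t%:R /\ forall m, mup x (pochX c m) = (t < m)%N.
Proof.
case: (classic (exists t : nat, x = c - t%:R)) => [[t ->]|not_shift].
  right; exists t; split=> // m; rewrite mup_pochX -sum_ord_eqn.
  by apply: eq_bigr => i _; rewrite (inj_eq (addrI c)) (inj_eq oppr_inj) eqr_nat.
left=> m; rewrite mup_pochX big1 // => i _; case: eqP => // h.
by case: not_shift; exists i; rewrite h.
Qed.

Lemma rC_subn (x : R) (t : nat) : rC x - t%:R = rC (x - t%:R).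
Proof. by rewrite /rC rmorphB rmorph_nat. Qed.

End Pochhammer.

Section Multiplicities.
Variables (R : rcfType) (d : R) (k l : seq nat).
Hypotheses (hk : Zpp k) (hl : Zpp l).
Local Notation p := (size k).
Local Notation q := (size l).
Local Notation h := (d / 2%:R).
Local Notation mult lam b m := (mup lam (pochX (rC (h * b%:R)) m)).

Lemma C0num_monic : C0num d k l \is monic.
Proof. by apply: monic_prod => i _; apply: monic_prod => j _; apply: pochX_monic. Qed.

Lemma C0den_monic : C0den d k l \is monic.
Proof. by apply: monic_prod => i _; apply: monic_prod => j _; apply: pochX_monic. Qed.

Lemma pochphi_monic : pochphi d k l \is monic.
Proof. by apply: monic_prod => i _; apply: pochX_monic. Qed.

Lemma mup_C0den (lam : R[i]) : mup lam (C0den d k l) =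
  (\sum_(0 <= b < p.+1 + q.+1) \sum_(0 <= i < p.+1)
     (if (i <= b) && (b - i < q.+1) then mult lam b (den_entry k l b i) else 0))%N.
Proof.
rewrite /C0den mup_prod; last first.
  by move=> i _; apply/monic_neq0/monic_prod => j _; apply: pochX_monic.
rewrite (eq_bigr (fun i => \sum_(1 <= j < q.+2)
   mup lam (pochX (rC (h * (i + j - 2)%N%:R)) (ent k i + ent l j)))%N); last first.
  by move=> i _; rewrite mup_prod // => j _; apply/monic_neq0/pochX_monic.
rewrite big_add1 /=; under eq_bigr do rewrite big_add1 /=.
rewrite sum_antidiagonals; apply: eq_bigr => b _; apply: eq_bigr => i _.
case: ifP => // /andP[h1 h2].
by have -> : (i.+1 + (b - i).+1 - 2 = b)%N by lia.
Qed.

Lemma mup_C0num (lam : R[i]) : mup lam (C0num d k l) =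
  (\sum_(0 <= s < p + q) \sum_(0 <= i < p)
     (if (i < s.+1) && (s - i < q) then mult lam s.+1 (num_entry k l s.+1 i) else 0))%N.
Proof.
rewrite /C0num mup_prod; last first.
  by move=> i _; apply/monic_neq0/monic_prod => j _; apply: pochX_monic.
rewrite (eq_bigr (fun i => \sum_(1 <= j < q.+1)
   mup lam (pochX (rC (h * (i + j - 1)%N%:R)) (ent k i + ent l j)))%N); last first.
  by move=> i _; rewrite mup_prod // => j _; apply/monic_neq0/pochX_monic.
rewrite big_add1 /=; under eq_bigr do rewrite big_add1 /=.
rewrite sum_antidiagonals; apply: eq_bigr => s _; apply: eq_bigr => i _.
rewrite ltnS; case: ifP => // /andP[h1 h2].
have -> : (i.+1 + (s - i).+1 - 1 = s.+1)%N by lia.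
by rewrite /num_entry; have -> : (s.+1 - i = (s - i).+1)%N by lia.
Qed.

Lemma mup_pochphi (lam : R[i]) :
  mup lam (pochphi d k l) = (\sum_(0 <= b < p + q) mult lam b (phi0 k l b.+1))%N.
Proof.
rewrite /pochphi mup_prod => [|i _]; last exact/monic_neq0/pochX_monic.
by rewrite big_add1 /=; apply: eq_bigr => b _; rewrite subn1.
Qed.

Lemma mup_balance (lam : R[i]) :
  (forall b t, (b <= p + q)%N -> lam = rC (h * b%:R) - t%:R -> balanced k l b t) ->
  (mup lam (pochphi d k l) + mup lam (C0num d k l) = mup lam (C0den d k l))%N.
Proof.
move=> bal; rewrite mup_pochphi mup_C0num mup_C0den.
set Dd := fun b => (\sum_(0 <= i < p.+1)
  (if (i <= b) && (b - i < q.+1) then mult lam b (den_entry k l b i) else 0))%N.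
set Nd := fun b => (\sum_(0 <= i < p)
  (if (i < b) && (b.-1 - i < q) then mult lam b (num_entry k l b i) else 0))%N.
have diag b : (b <= p + q)%N -> (mult lam b (phi0 k l b.+1) + Nd b = Dd b)%N.
  move=> hb; case: (mup_pochX_cases lam (rC (h * b%:R))) => [Z | [t [ht E]]].
    by rewrite Z /Nd /Dd big1 ?[RHS]big1 // => i _; case: ifP; rewrite ?Z.
  have -> : Nd b = num_count k l b t by apply: eq_bigr => i _; case: ifP; rewrite ?E.
  have -> : Dd b = den_count k l b t by apply: eq_bigr => i _; case: ifP; rewrite ?E.
  by rewrite E; apply: bal.
have -> : (p.+1 + q.+1 = (p + q).+2)%N by lia.
rewrite [in RHS](eq_bigr Dd) // [X in (_ + X)%N](eq_bigr (fun s => Nd s.+1)) //.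
rewrite big_nat_recr //=.
have -> : Dd (p + q).+1 = 0%N.
  rewrite /Dd big_nat_cond big1 // => i /andP[/andP[_ hi] _]; rewrite ifF //.
  by apply/negbTE; apply/negP => /andP[]; lia.
rewrite addn0 (@eq_big_nat _ _ _ 0 (p + q).+1 Dd (fun b => mult lam b (phi0 k l b.+1) + Nd b)%N);
  last by move=> b /andP[_ hb]; rewrite diag.
rewrite big_split /= big_nat_recr //= (phi0_last hk hl) mup_pochX big_ord0 addn0.
by rewrite [in RHS]big_nat_recl // [Nd 0%N]big1.
Qed.

End Multiplicities.

Section ScaledShifts.
Variables (R : rcfType) (h : R).
Hypothesis hh : 0 < h.

Lemma scaled_window (a b c s t u : nat) : (a <= b <= c)%N -> (s <= t < u)%N ->
  h * a%:R - u%:R + 1 <= h * b%:R - t%:R /\ h * b%:R - t%:R <= h * c%:R - s%:R.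
Proof.
move=> /andP[ab bc] /andP[st tu].
have ha : h * a%:R <= h * b%:R by rewrite ler_pM2l // ler_nat.
have hc : h * b%:R <= h * c%:R by rewrite ler_pM2l // ler_nat.
have hu : t%:R + 1 <= u%:R :> R by rewrite natr1 ler_nat.
have hs : s%:R <= t%:R :> R by rewrite ler_nat.
split; lra.
Qed.

Lemma scaled_shift_cases (m b t : nat) : rC (h * m%:R) = rC (h * b%:R) - t%:R ->
  (m < b)%N \/ (m = b /\ t = 0%N).
Proof.
rewrite rC_subn => /complexI eq_mbt.
have ht : 0 <= t%:R :> R by rewrite ler0n.
case: (ltngtP m b) => [|hbm|eq_mb]; [by left | exfalso | right; split => //].
  have hlt : h * b%:R < h * m%:R by rewrite ltr_pM2l // ltr_nat.
  lra.
suff : t%:R = 0 :> R by move/eqP; rewrite pnatr_eq0 => /eqP.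
by move: eq_mbt; rewrite eq_mb; lra.
Qed.

End ScaledShifts.

Section Proposition.
Variables (R : rcfType) (d : R) (k l : seq nat).
Hypotheses (hd : 0 < d) (hk : Zpp k) (hl : Zpp l).
Local Notation p := (size k).
Local Notation q := (size l).
Local Notation h := (d / 2%:R).

Let hh : 0 < h. Proof. by rewrite divr_gt0 // ltr0n. Qed.

Lemma unbalanced_at_root (Q : {poly R[i]}) (lam : R[i]) :
  Q * C0den d k l = pochphi d k l * C0num d k l -> root Q lam ->
  exists b t, [/\ (b <= p + q)%N, lam = rC (h * b%:R) - t%:R & ~ balanced k l b t].
Proof.
move=> hQ rootQ; apply: NNPP => all_balanced.
have nzP := monic_neq0 (pochphi_monic d k l).
have nzN := monic_neq0 (C0num_monic d k l).
have nzD := monic_neq0 (C0den_monic d k l).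
have nzQ : Q != 0.
  by apply: contra_neq (mulf_neq0 nzP nzN) => Q0; rewrite -hQ Q0 mul0r.
have mupQ : (mup lam Q + mup lam (C0den d k l) =
             mup lam (pochphi d k l) + mup lam (C0num d k l))%N by rewrite -!mupM // hQ.
have : (0 < mup lam Q)%N by rewrite -XsubC_dvd // dvdp_XsubCl.
rewrite (mup_balance hk hl) in mupQ; first lia.
move=> b t hb ht; apply: NNPP => unbal; apply: all_balanced.
by exists b, t.
Qed.

Lemma mup_balance_phi0_edge m m0 :
  phi0 k l m.+1 = 0%N -> phi0 k l m <> 0%N -> m0 = m \/ m0 = m.-1 ->
  (mup (rC (h * m0%:R)) (pochphi d k l) + mup (rC (h * m0%:R)) (C0num d k l)
   = mup (rC (h * m0%:R)) (C0den d k l))%N.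
Proof.
move=> hphi1 hphi0 hm0; apply: (mup_balance hk hl) => b t hb /(scaled_shift_cases hh).
by move=> hbt; apply: (balanced_phi0_edge hk hl hphi1 hphi0 hb); lia.
Qed.

Lemma mup_pochphi_phi0_edge m : phi0 k l m.+1 = 0%N ->
  mup (rC (h * m%:R)) (pochphi d k l) = 0%N.
Proof.
move=> hphi1; rewrite mup_pochphi big_nat_cond big1 // => b /andP[/andP[_ hb] _].
case: (leqP m b) => hmb.
  by rewrite (phi0_eq0_after hk hl hphi1) ?mup_pochX ?big_ord0 //; lia.
rewrite mup_pochX big1 // => i _; case: eqP => // /esym /(scaled_shift_cases hh).
lia.
Qed.

Lemma mup_pochphi_phi0_edge_pred m : (1 <= m <= p + q)%N -> phi0 k l m <> 0%N ->
  (0 < mup (rC (h * m.-1%:R)) (pochphi d k l))%N.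
Proof.
move=> hm hphi0; rewrite mup_pochphi (bigD1_seq m.-1) ?mem_index_iota ?iota_uniq //=;
  last lia.
rewrite prednK ?mup_pochX; last lia.
case: (phi0 k l m) hphi0 => [//|n _].
by rewrite big_ord_recl /= subr0 eqxx.
Qed.

End Proposition.

Theorem proposition5p5 (R : rcfType) (d : R) (k l : seq nat) :
  0 < d -> (0 < size k)%N -> (0 < size l)%N -> Zpp k -> Zpp l ->
  (forall (m1' m2' m1'' m2'' : nat),
     (1 <= m1' <= m2')%N -> (m2' <= size k)%N ->
     (1 <= m1'' <= m2'')%N -> (m2'' <= size l)%N ->
     (forall i, (1 <= i <= m1')%N -> ent k i = ent k 1) ->
     (forall j, (1 <= j <= m1'')%N -> ent l j = ent l 1) ->
     ent k m2'.+1 = 0%N -> ent l m2''.+1 = 0%N ->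
     forall (Q : {poly R[i]}),
       Q * C0den d k l = pochphi d k l * C0num d k l ->
       forall lam : R[i], root Q lam ->
         if (ent k 1 * ent l 1 == 0)%N then False
         else exists x : R, lam = rC x /\
           d / 2%:R * (maxn m1' m1'')%:R - (ent k 1 + ent l 1)%:R + 1 <= x /\
           x <= d / 2%:R * (m2' + m2'' - 1)%N%:R - (maxn (ent k m2') (ent l m2''))%:R)
  /\
  (forall m : nat, (1 <= m)%N -> (m <= size k + size l - 1)%N ->
     phi0 k l m.+1 = 0%N -> phi0 k l m <> 0%N ->
     mup (rC (d / 2%:R * m%:R)) (C0num d k l)
       = mup (rC (d / 2%:R * m%:R)) (C0den d k l)
     /\ (mup (rC (d / 2%:R * m.-1%:R)) (C0num d k l)
       < mup (rC (d / 2%:R * m.-1%:R)) (C0den d k l))%N).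
Proof.
move=> hd _ _ hk hl; have hh : 0 < d / 2%:R by rewrite divr_gt0 // ltr0n.
split.
  move=> m1' m2' m1'' m2'' _ _ _ _ hK1 hL1 hK2 hL2 Q hQ lam rootQ.
  have [b [t [hb -> unbal]]] := unbalanced_at_root hd hk hl hQ rootQ.
  case: eqP => [KL0 | _]; first by case: unbal; apply: (balanced_degenerate hk hl).
  have [hb1 hb2 ht1 ht2] := unbalanced_window hk hl hK1 hL1 hK2 hL2 hb unbal.
  exists (d / 2%:R * b%:R - t%:R); rewrite rC_subn; split=> //.
  by apply: scaled_window => //; apply/andP; split.
move=> m hm1 hm2 hphi1 hphi0.
have := mup_balance_phi0_edge hd hk hl hphi1 hphi0 (or_introl erefl).
have := mup_balance_phi0_edge hd hk hl hphi1 hphi0 (or_intror erefl).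
have := mup_pochphi_phi0_edge hd hk hl hphi1.
have := mup_pochphi_phi0_edge_pred hd hk hl (m := m) ltac:(lia) hphi0.
lia.
Qed.
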